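(* Let $p$ be a binary word of length $l$, and for $i\ge1$ let $r_i$ be the number of runs of $p$ of size $i$. Then for every $k\ge 2$, $$B_{l+1,p}(k)=r_{k-1}.$$
   Context: $c_p(w)$ is the number of occurrences of $p$ as a (not necessarily consecutive) subsequence of the binary word $w$; $B_{n,p}(k)$ is the number of binary words of length $n$ with $c_p(w)=k$. A run is a maximal block of consecutive equal letters; its size is its length. *)

From mathcomp Require Import all_boot.
Set Implicit Arguments. Unset Strict Implicit. Unset Printing Implicit Defensive.

(* c_p(w): number of occurrences of p as a (not necessarily consecutive)
   subsequence of w, i.e. the number of index subsets of w (encoded as
   selection masks m of length |w|) whose selected letters spell p. *)
Definition occ (p w : seq bool) : nat :=
  #|[pred m : (size w).-tuple bool | mask m w == p]|.

Definition B (n : nat) (p : seq bool) (k : nat) : nat :=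
  #|[pred w : n.-tuple bool | occ p w == k]|.

Definition runAt (p : seq bool) (j i : nat) : bool :=
  [&& 0 < i, j + i <= size p,
      all (fun t => nth false p t == nth false p j) (iota j i),
      (j == 0) || (nth false p j.-1 != nth false p j)
    & (j + i == size p) || (nth false p (j + i) != nth false p j)].

Definition nruns (p : seq bool) (i : nat) : nat :=
  count (fun j => runAt p j i) (iota 0 (size p)).

From mathcomp Require Import all_boot zify.
Set Implicit Arguments. Unset Strict Implicit. Unset Printing Implicit Defensive.

(* An occurrence of p in a word w of length l+1 omits exactly one letter of w,
   so c_p(w) is the number of positions i with del i w = p (occ_del).  Deleting
   any letter of a run of w gives the same word, while deleting letters of
   different runs gives different words; hence if c_p(w) > 0, exactly one
   deletion position yielding p is the start of a run (unique_runStart_del),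
   and c_p(w) is the size of that run of w (occ_ins_runStart).  Writing
   w = ins i a p for that run start i, the word w has c_p(w) = k >= 2 exactly
   when a = p_i and a run of p of size k-1 starts at i (del_runStart_occ).
   Summing over w and i then counts each run of p of size k-1 exactly once. *)

Definition del (i : nat) (s : seq bool) : seq bool := take i s ++ drop i.+1 s.
Definition ins (i : nat) (a : bool) (s : seq bool) : seq bool := take i s ++ a :: drop i s.

Definition runStart (i : nat) (w : seq bool) : bool :=
  (i == 0) || (nth false w i.-1 != nth false w i).

Fixpoint runlen (a : bool) (s : seq bool) : nat :=
  if s is b :: s' then (if b == a then (runlen a s').+1 else 0) else 0.

Lemma size_del i s : i < size s -> size (del i s) = (size s).-1.
Proof. by move=> hi; rewrite /del size_cat size_takel ?(ltnW hi) // size_drop; lia. Qed.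

Lemma nth_del i s t : i < size s ->
  nth false (del i s) t = nth false s (if t < i then t else t.+1).
Proof.
move=> hi; rewrite /del nth_cat size_takel ?(ltnW hi) //.
by case: ifP => ht; [rewrite nth_take | rewrite nth_drop; congr nth; lia].
Qed.

Lemma del_shift i u w : i <= size w -> del (i + u) w = take i w ++ del u (drop i w).
Proof.
by move=> hi; rewrite /del takeD -catA drop_drop; congr (_ ++ (_ ++ _)); congr drop; lia.
Qed.

Lemma size_ins i a p : i <= size p -> size (ins i a p) = (size p).+1.
Proof. by move=> hi; rewrite /ins size_cat /= size_takel // size_drop; lia. Qed.

Lemma nth_ins_lt i a p t : t < i -> i <= size p -> nth false (ins i a p) t = nth false p t.
Proof. by move=> ht hi; rewrite /ins nth_cat size_takel // ht nth_take. Qed.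

Lemma nth_ins_eq i a p : i <= size p -> nth false (ins i a p) i = a.
Proof. by move=> hi; rewrite /ins nth_cat size_takel // ltnn subnn. Qed.

Lemma drop_ins i a p : i <= size p -> drop i (ins i a p) = a :: drop i p.
Proof. by move=> hi; rewrite /ins drop_cat size_takel // ltnn subnn drop0. Qed.

Lemma ins_inj i a b p : i <= size p -> (ins i a p == ins i b p) = (a == b).
Proof. by move=> hi; apply/eqP/eqP => [E|->] //; rewrite -(nth_ins_eq a hi) E nth_ins_eq. Qed.

Lemma del_ins i a p : i <= size p -> del i (ins i a p) = p.
Proof.
move=> hi; rewrite /del /ins take_cat drop_cat size_takel // ltnn ltnNge leqnSn /=.
by rewrite subnn take0 cats0 subSnn drop1 /= cat_take_drop.
Qed.

Lemma ins_del i w : i < size w -> ins i (nth false w i) (del i w) = w.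
Proof.
move=> hi; rewrite /ins /del take_cat drop_cat size_takel ?(ltnW hi) // ltnn subnn.
by rewrite take0 cats0 drop0 -drop_nth // cat_take_drop.
Qed.

Definition holeMask (n i : nat) : seq bool := nseq i true ++ false :: nseq (n - i.+1) true.

Lemma size_holeMask n (i : 'I_n) : size (holeMask n i) == n.
Proof. by have := ltn_ord i; rewrite /holeMask size_cat /= !size_nseq => h; apply/eqP; lia. Qed.

Definition holeTuple n (i : 'I_n) : n.-tuple bool := Tuple (size_holeMask i).

Lemma holeTuple_inj n : injective (@holeTuple n).
Proof.
move=> i j /(congr1 (index false \o val)) /=.
by rewrite /holeMask !index_cat !mem_nseq !andbF !size_nseq /= !addn0 => /val_inj.
Qed.

Lemma mask_holeMask w i : i < size w -> mask (holeMask (size w) i) w = del i w.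
Proof.
move=> hi; have hti : size (take i w) = i by rewrite size_takel // ltnW.
rewrite /holeMask -[X in mask _ X](cat_take_drop i w) mask_cat ?size_nseq //.
rewrite mask_true ?hti // (drop_nth false hi) /= mask_true //.
by rewrite size_drop; lia.
Qed.

Lemma nseq_true_count (s : seq bool) : count_mem false s = 0 -> s = nseq (size s) true.
Proof. by elim: s => [|[] s IH] //= /IH {1}->. Qed.

Lemma mask_one_short (m w p : seq bool) : size m = size w -> size w = (size p).+1 ->
  mask m w = p -> exists2 i, i < size w & m = holeMask (size w) i.
Proof.
move=> hm hw hp.
have hc : count_mem false m = 1.
  have := count_predC id m; rewrite -(size_mask hm) hp (eq_count (a2 := pred1 false)) => [|[]//].
  lia.
set i := index false m.
have hin : false \in m by rewrite -has_pred1 has_count hc.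
have hi : i < size m by rewrite index_mem.
have Em : m = take i m ++ false :: drop i.+1 m.
  by rewrite -{1}(nth_index false hin) -drop_nth // cat_take_drop.
move: hc; rewrite {1}Em count_cat /= add1n addnS => /eqP; rewrite eqSS addn_eq0.
case/andP => /eqP/nseq_true_count E1 /eqP/nseq_true_count E2.
exists i; first by rewrite -hm.
by rewrite Em E1 E2 /holeMask size_takel ?size_drop -?hm ?(ltnW hi).
Qed.

Lemma card_ord_count n (P : pred nat) : #|[pred i : 'I_n | P i]| = count P (iota 0 n).
Proof.
rewrite -sum1_card -sum1_count.
have -> : iota 0 n = index_iota 0 n by rewrite /index_iota subn0.
rewrite big_mkord.
by apply: eq_bigl => i; rewrite inE.
Qed.

Lemma sum_indicator_card (T : finType) (P : pred T) : \sum_(x : T) (P x : nat) = #|[pred x | P x]|.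
Proof. by rewrite -sum1_card [RHS]big_mkcond /=; apply: eq_bigr => x _; rewrite inE. Qed.

Lemma occ_del p w : size w = (size p).+1 ->
  occ p w = count (fun i => del i w == p) (iota 0 (size w)).
Proof.
move=> hw; rewrite /occ -card_ord_count -(card_imset _ (@holeTuple_inj (size w))).
apply: eq_card => m; rewrite inE /=; apply/eqP/imsetP => [hp | [i]].
  have [i hi hm] := mask_one_short (size_tuple m) hw hp.
  exists (Ordinal hi); first by rewrite inE /= -mask_holeMask // -hm hp.
  by apply: val_inj; rewrite /= hm.
by rewrite inE => /eqP hp ->; rewrite /= mask_holeMask.
Qed.

(* Deleting any letter of the leading run of s gives the same word, and the other
   deletions give different words. *)
Lemma count_del_leading_run s :
  count (fun u => del u s == del 0 s) (iota 0 (size s)) = runlen (head false s) s.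
Proof.
elim: s => [|x s IH] //=; rewrite eqxx /= add1n eqxx; congr S.
rewrite -(add0n 1) addnC iotaDl count_map.
case: s IH => [|y s] IH //.
rewrite (eq_count (a2 := fun u => (x == y) && (del u (y :: s) == del 0 (y :: s)))); last first.
  by move=> u; rewrite /preim /= add1n /del /= drop0.
rewrite [RHS]/= eq_sym; case: eqP => [<-|_]; first by rewrite IH /= eqxx.
by rewrite (eq_count (a2 := pred0)) ?count_pred0.
Qed.

(* Deleting a letter before the start i of a run of w changes the letter seen at i-1. *)
Lemma del_before_runStart t i w : runStart i w -> t < i -> i < size w -> del t w != del i w.
Proof.
move=> hstart ht hi; apply/eqP => /(congr1 (nth false ^~ i.-1)).
rewrite !nth_del //; last lia.
have i0 : 0 < i by lia.
have h1 : (i.-1 < t) = false by lia.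
have h2 : i.-1 < i by lia.
rewrite h1 h2 (prednK i0) => E.
by move: hstart; rewrite /runStart E eqxx orbF => /eqP; lia.
Qed.

Lemma del_equal_neighbours i w : 0 < i -> i < size w ->
  nth false w i.-1 = nth false w i -> del i.-1 w = del i w.
Proof.
move=> h0 hi E; apply: (@eq_from_nth _ false); first by rewrite !size_del //; lia.
move=> t _; rewrite !nth_del //; last lia.
case: (ltngtP t i.-1) => h.
- by rewrite (_ : t < i) //; lia.
- by rewrite (_ : (t < i) = false) //; lia.
- by rewrite h (_ : i.-1 < i) ?prednK //; lia.
Qed.

Lemma count_del_runStart w i : i < size w -> runStart i w ->
  count (fun t => del t w == del i w) (iota 0 (size w)) = runlen (nth false w i) (drop i w).
Proof.
move=> hi hstart.
rewrite -(subnKC (ltnW hi)) iotaD count_cat add0n (eq_in_count (a2 := pred0)); last first.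
  move=> t; rewrite mem_iota add0n => /andP [_ ht].
  exact/negbTE/del_before_runStart.
have -> : iota i (size w - i) = map (addn i) (iota 0 (size w - i)) by rewrite -iotaDl addn0.
rewrite count_pred0 add0n count_map.
have -> : nth false w i = head false (drop i w) by rewrite -nth0 nth_drop addn0.
rewrite -(count_del_leading_run (drop i w)) size_drop.
apply: eq_count => u /=.
by rewrite -{2}(addn0 i) !del_shift ?(ltnW hi) // eqseq_cat // eqxx.
Qed.

Lemma runlen_spec a s m : (runlen a s == m) =
  [&& m <= size s, all (fun t => nth false s t == a) (iota 0 m)
    & (m == size s) || (nth false s m != a)].
Proof.
elim: s m => [|x s IH] [|m] //=; first by case: (x == a).
case: (x =P a) => [->|_] /=; last by rewrite andbC.
rewrite (_ : ((runlen a s).+1 == m.+1) = (runlen a s == m)) // IH ltnS.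
by rewrite -(add0n 1) addnC iotaDl all_map.
Qed.

Lemma runAt_runlen p i m : 0 < m -> i <= size p ->
  runAt p i m = runStart i p && (runlen (nth false p i) (drop i p) == m).
Proof.
move=> hm hi; rewrite runlen_spec size_drop /runAt /runStart hm /=.
have -> : iota i m = map (addn i) (iota 0 m) by rewrite -iotaDl addn0.
rewrite all_map (eq_all (a1 := fun t => nth false (drop i p) t == nth false p i)
                         (a2 := fun t => nth false p (i + t) == nth false p i)); last first.
  by move=> t /=; rewrite nth_drop.
rewrite nth_drop (_ : (m <= size p - i) = (i + m <= size p)); last by lia.
rewrite (_ : (m == size p - i) = (i + m == size p)); last by lia.
by case: (_ || _); rewrite ?andbF.
Qed.

Section Counting.

Variable p : seq bool.

(* If p occurs in w, then among the deletions of w giving p exactly one is at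
   the start of a run: the first such position. *)
Lemma unique_runStart_del w : size w = (size p).+1 -> 0 < occ p w ->
  #|[pred i : 'I_(size p).+1 | (del i w == p) && runStart i w]| = 1.
Proof.
move=> hw hocc.
have ex : exists j, (j < size w) && (del j w == p).
  move: hocc; rewrite occ_del // -has_count => /hasP [j].
  by rewrite mem_iota => /andP [_ hj] hd; exists j; rewrite hj hd.
case: (ex_minnP ex) => i0 /andP [hi0 /eqP hd0] hmin.
have hi0' : i0 < (size p).+1 by rewrite -hw.
rewrite (@eq_card1 _ (Ordinal hi0')) // => i; rewrite inE /=.
have hi : i < size w by rewrite hw.
apply/andP/eqP => [[/eqP hd hstart] | ->] /=.
  apply: val_inj => /=; have : i0 <= i by apply: hmin; rewrite hi hd eqxx.
  rewrite leq_eqVlt => /orP [/eqP //| lt_i0_i].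
  by have := del_before_runStart hstart lt_i0_i hi; rewrite hd hd0 eqxx.
split; first by rewrite hd0.
apply/negPn/negP; rewrite /runStart negb_or negbK -lt0n => /andP [hpos /eqP heq].
have := hmin i0.-1; rewrite del_equal_neighbours // hd0 eqxx andbT; lia.
Qed.

Lemma occ_indicator w k : size w = (size p).+1 -> 0 < k ->
  (occ p w == k : nat) =
  \sum_(i < (size p).+1) [&& del i w == p, runStart i w & occ p w == k].
Proof.
move=> hw hk; case: (occ p w =P k) => [E|_]; last by rewrite big1 // => i _; rewrite !andbF.
under eq_bigr do rewrite andbT.
by rewrite sum_indicator_card unique_runStart_del // E.
Qed.

Lemma runStart_ins i a : i <= size p ->
  runStart i (ins i a p) = (i == 0) || (nth false p i.-1 != a).
Proof. by case: i => [|i] // hi; rewrite /runStart /= nth_ins_lt ?nth_ins_eq. Qed.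

Lemma occ_ins_runStart i a : i <= size p -> runStart i (ins i a p) ->
  occ p (ins i a p) = (runlen a (drop i p)).+1.
Proof.
move=> hi hstart; have hlen := size_ins a hi.
have hlt : i < size (ins i a p) by rewrite hlen ltnS.
have := count_del_runStart hlt hstart; rewrite del_ins // => count_eq.
by rewrite occ_del // count_eq drop_ins // nth_ins_eq //= eqxx.
Qed.

Lemma del_runStart_occ w i k : size w = (size p).+1 -> i < size w -> 2 <= k ->
  [&& del i w == p, runStart i w & occ p w == k] =
  runAt p i k.-1 && (w == ins i (nth false p i) p).
Proof.
move=> hw hi hk; have hip : i <= size p by rewrite -ltnS -hw.
case: (del i w =P p) => [hd | hd]; last first.
  by symmetry; apply/negbTE/negP => /andP [_ /eqP E]; apply: hd; rewrite E del_ins.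
have Ew : w = ins i (nth false w i) p by rewrite -hd ins_del.
move: (nth false w i) Ew => a -> {hd hw hi}.
rewrite /= ins_inj // runAt_runlen //; last by lia.
case: (a =P nth false p i) => [E | ne]; rewrite ?andbT ?andbF.
  rewrite {2}/runStart -E -runStart_ins //.
  case hstart: (runStart i (ins i a p)) => //=.
  by rewrite occ_ins_runStart //; case: k hk.
case hstart: (runStart i (ins i a p)) => //=.
rewrite occ_ins_runStart //.
suff -> : runlen a (drop i p) = 0 by case: k hk => [|[]].
move: ne; rewrite -[i in nth _ _ i]addn0 -nth_drop.
by case: (drop i p) => [|b s] //= /eqP; rewrite eq_sym => /negbTE ->.
Qed.

End Counting.

Lemma sum_tuple_indicator n (b : bool) (s : seq bool) : size s = n ->
  \sum_(w : n.-tuple bool) (b && (val w == s) : nat) = b.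
Proof.
move=> hs; case: b; last by rewrite big1.
have hs' : size s == n by rewrite hs.
by rewrite sum_indicator_card (@eq_card1 _ (Tuple hs')) // => w; rewrite inE.
Qed.

Lemma runAt_size p m : runAt p (size p) m = false.
Proof. by apply/negbTE/and5P => [[hm hle _ _ _]]; lia. Qed.

Theorem mainTheorem4 (p : seq bool) (k : nat) :
  2 <= k -> B (size p).+1 p k = nruns p k.-1.
Proof.
move=> hk.
rewrite /B -sum_indicator_card.
under eq_bigr => w _ do rewrite (occ_indicator (size_tuple w) (ltnW hk)).
rewrite exchange_big /=.
under eq_bigr => i _.
  under eq_bigr => w _ do rewrite (del_runStart_occ (size_tuple w) _ hk) ?size_tuple //.
  rewrite (sum_tuple_indicator _ (size_ins (nth false p i) (ltnSE (ltn_ord i)))).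
  over.
rewrite sum_indicator_card (card_ord_count _ (fun j => runAt p j k.-1)).
by rewrite /nruns -addn1 iotaD count_cat /= runAt_size !addn0.
Qed.
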